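(* Let $n=p^k$, where $p$ is an odd prime and $k>2$ is an integer, and let $G=\langle p^{k-1}-1\rangle$ be the subgroup of $\mathbb{Z}_n^\times$ generated by $p^{k-1}-1$. Then the coset index function $f_G$ is a $\left(p^k,\frac{2p^{k-1}-p^{k-2}+1}{2},\{1,p,p^k-p^{k-1}+1\}\right)$ zero-difference function.
   Context: For a subgroup $G$ of $\mathbb{Z}_n^\times$ and $r\in\mathbb{Z}_n$, the coset $rG=\{rg\mid g\in G\}$; these cosets partition $\mathbb{Z}_n$, forming a set $D_G$. The coset index function induced by $G$ is $f_G:\mathbb{Z}_n\to\mathbb{Z}_{|D_G|}$, $f_G(x)=h_G(C_x)$, where $C_x$ is the coset containing $x$ and $h_G:D_G\to\mathbb{Z}_{|D_G|}$ is a fixed bijection. A function $f:A\to B$ between finite abelian groups is an $(n,m,S)$ zero-difference function if $n=|A|$, $m=|f(A)|$, and for every nonzero $a\in A$, $|\{x\in A\mid f(x+a)=f(x)\}|\in S$. Here $A=(\mathbb{Z}_n,+)$. *)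

From HB Require Import structures.
From mathcomp Require Import all_boot all_order all_algebra all_fingroup.
Set Implicit Arguments. Unset Strict Implicit. Unset Printing Implicit Defensive.
Import GRing.Theory.
Local Open Scope ring_scope.

Definition ucoset (n : nat) (G : {set {unit 'Z_n}}) (r : 'Z_n) : {set 'Z_n} :=
  [set r * val g | g in G].

Definition cosets (n : nat) (G : {set {unit 'Z_n}}) : {set {set 'Z_n}} :=
  [set ucoset G r | r : 'Z_n].

(* The coset containing x (for G a group, this is xG since 1 \in G). *)
Definition coset_containing (n : nat) (G : {set {unit 'Z_n}}) (x : 'Z_n) : {set 'Z_n} :=
  pblock (cosets G) x.

(* Coset index function f_G(x) = h_G(C_x), for a bijection h : D_G -> Z_|D_G|. *)
Definition coset_index_fun (n : nat) (G : {set {unit 'Z_n}})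
  (h : {set 'Z_n} -> 'I_#|cosets G|) (x : 'Z_n) : 'I_#|cosets G| :=
  h (coset_containing G x).

Definition zero_difference (A : finZmodType) (B : finType) (f : A -> B)
  (N m : nat) (S : pred nat) : Prop :=
  [/\ N = #|A|, m = #|[set f x | x : A]|
    & forall a : A, a != 0 -> S #|[set x : A | f (x + a) == f x]| ].

From HB Require Import structures.
From mathcomp Require Import all_boot all_order all_algebra all_fingroup.
From mathcomp Require Import cyclic zify ring.
Set Implicit Arguments. Unset Strict Implicit. Unset Printing Implicit Defensive.
Import GRing.Theory.

(** Write e = p^(k-1) in Z/p^k, so that e^2 = 0, p e = 0, and x e = 0 exactly
   when x is not a unit.  Then u = e - 1 has order 2p and generates
   G = {±(1 + c e)}.  The coset xG is {0} for x = 0, {x, -x} for a nonzero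
   nonunit x, and has 2p elements for a unit x; weighting each x by 2p / |xG|
   counts every coset 2p times, which gives the number of cosets.  For a != 0,
   f(x + a) = f(x) iff x + a = ±x(1 + c e), i.e. a = x c e or a = -x(2 + c e).
   For a unit a only the second is possible, and x = -a / (2 + t e), t < p.
   For a nonunit a the second forces x = -a/2, while the first has solutions,
   namely all units x, exactly when a is a multiple of e. *)

Lemma exprD1_sqr0 (R : comNzRingType) (x : R) n :
  (x * x = 0 -> (1 + x) ^+ n = 1 + x *+ n)%R.
Proof.
move=> xx0; elim: n => [|n IHn]; first by rewrite expr0 mulr0n addr0.
rewrite exprS IHn.
have -> : ((1 + x) * (1 + x *+ n) = 1 + x *+ n.+1 + (x * x) *+ n)%R by ring.
by rewrite xx0 mul0rn addr0.
Qed.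

Section UnitCosets.
Local Open Scope ring_scope.
Variables (n : nat) (G : {group {unit 'Z_n}}).

Lemma ucoset_in_cosets x : ucoset G x \in cosets G.
Proof. exact: imset_f. Qed.

Lemma ucoset_refl x : x \in ucoset G x.
Proof. by apply/imsetP; exists 1%g; rewrite ?group1 // FinRing.val_unit1 mulr1. Qed.

Lemma ucoset_sym x y : y \in ucoset G x -> x \in ucoset G y.
Proof.
case/imsetP=> g gG ->; apply/imsetP; exists g^-1%g; first by rewrite groupV.
by rewrite FinRing.val_unitV mulrK // (valP g).
Qed.

Lemma ucoset_trans x y z : y \in ucoset G x -> z \in ucoset G y -> z \in ucoset G x.
Proof.
case/imsetP=> g gG -> /imsetP[g' g'G ->]; apply/imsetP; exists (g * g')%g.
  exact: groupM.
by rewrite FinRing.val_unitM mulrA.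
Qed.

Lemma ucoset_eq x y : y \in ucoset G x -> ucoset G y = ucoset G x.
Proof.
move=> yx; apply/setP=> z; apply/idP/idP; first exact: ucoset_trans.
exact: ucoset_trans (ucoset_sym yx).
Qed.

Lemma trivIset_cosets : trivIset (cosets G).
Proof.
apply/trivIsetP=> _ _ /imsetP[x _ ->] /imsetP[y _ ->] xy_neq.
rewrite -setI_eq0; apply: contraNT xy_neq => /set0Pn[z /setIP[zx zy]].
by rewrite -(ucoset_eq zx) (ucoset_eq zy).
Qed.

Lemma cover_cosets : cover (cosets G) = setT.
Proof.
apply/setP=> x; rewrite inE; apply/bigcupP.
by exists (ucoset G x); [exact: ucoset_in_cosets | exact: ucoset_refl].
Qed.

Lemma coset_containingE x : coset_containing G x = ucoset G x.
Proof.
apply: def_pblock; [exact: trivIset_cosets | exact: ucoset_in_cosets | exact: ucoset_refl].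
Qed.

Lemma ucoset0 : ucoset G 0 = [set 0].
Proof.
apply/setP=> y; rewrite inE; apply/imsetP/eqP=> [[g _ ->] | ->]; first by rewrite mul0r.
by exists 1%g; rewrite ?group1 ?mul0r.
Qed.

Lemma card_ucoset_unit x : x \is a GRing.unit -> #|ucoset G x| = #|G|.
Proof. by move=> xU; apply: card_in_imset => g g' _ _ /(mulrI xU)/val_inj. Qed.

Lemma sum_div_card_ucoset m : (forall x, #|ucoset G x| %| m)%N ->
  (\sum_x m %/ #|ucoset G x| = #|cosets G| * m)%N.
Proof.
move=> dvd_m; rewrite -sum_nat_const.
transitivity (\sum_(x in cover (cosets G)) m %/ #|ucoset G x|)%N.
  by apply: eq_bigl => x; rewrite cover_cosets inE.
rewrite big_trivIset ?trivIset_cosets //; apply: eq_bigr => _ /imsetP[x _ ->].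
rewrite (eq_bigr (fun=> m %/ #|ucoset G x|)%N) => [|y /ucoset_eq -> //].
by rewrite sum_nat_const mulnC divnK.
Qed.

Variable h : {set 'Z_n} -> 'I_#|cosets G|.
Hypothesis h_inj : {in cosets G &, injective h}.

Lemma coset_index_funE x y :
  (coset_index_fun h y == coset_index_fun h x) = (y \in ucoset G x).
Proof.
rewrite /coset_index_fun !coset_containingE; apply/eqP/idP=> [|/ucoset_eq -> //].
by move/h_inj=> <-; rewrite ?ucoset_refl ?ucoset_in_cosets.
Qed.

Lemma card_coset_index_image : #|[set coset_index_fun h x | x : 'Z_n]| = #|cosets G|.
Proof.
have -> : [set coset_index_fun h x | x : 'Z_n] = h @: cosets G.
  by rewrite -imset_comp; apply: eq_imset => x; rewrite /= /coset_index_fun coset_containingE.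
exact: card_in_imset.
Qed.

End UnitCosets.

Section PrimePowerModulus.
Local Open Scope ring_scope.
Variables p k : nat.
Hypotheses (p_pr : prime p) (k_gt1 : (1 < k)%N).
Local Notation R := 'Z_(p ^ k).
Local Notation e := ((p ^ k.-1)%:R : R).

Lemma pk_gt1 : (1 < p ^ k)%N.
Proof. by rewrite -(expn0 p) ltn_exp2l ?prime_gt1 // ltnW. Qed.

Lemma card_Zpk : #|R| = (p ^ k)%N.
Proof. by rewrite card_ord Zp_cast // pk_gt1. Qed.

Lemma natr_Zpk_eq0 m : ((m%:R : R) == 0) = (p ^ k %| m)%N.
Proof. by rewrite -val_eqE /= val_Zp_nat ?pk_gt1. Qed.

Lemma expn_pred : (p ^ k = p * p ^ k.-1)%N.
Proof. by rewrite -expnS prednK // ltnW. Qed.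

Lemma mulee : e * e = 0.
Proof. by apply/eqP; rewrite -natrM natr_Zpk_eq0 -expnD dvdn_exp2l //; lia. Qed.

Lemma mulpe : p%:R * e = 0.
Proof. by apply/eqP; rewrite -natrM natr_Zpk_eq0 -expn_pred. Qed.

Lemma unit_ZpkE (x : R) : (x \is a GRing.unit) = ~~ (p %| x)%N.
Proof.
by rewrite -{1}(natr_Zp x) unitZpE ?pk_gt1 // coprime_pexpl ?prime_coprime // ltnW.
Qed.

Lemma natr_mule_eq0 m : ((m%:R : R) * e == 0) = (p %| m)%N.
Proof.
rewrite -natrM natr_Zpk_eq0 [X in (X %| _)%N]expn_pred.
by rewrite dvdn_pmul2r // expn_gt0 prime_gt0.
Qed.

Lemma mulr_e_eq0 (x : R) : (x * e == 0) = (x \isn't a GRing.unit).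
Proof. by rewrite -{1}(natr_Zp x) natr_mule_eq0 unit_ZpkE negbK. Qed.

Lemma e_neq0 : e != 0.
Proof. by rewrite -[e]mul1r mulr_e_eq0 unitr1. Qed.

Lemma unitrDmule (x c : R) : (x + c * e \is a GRing.unit) = (x \is a GRing.unit).
Proof.
apply: negb_inj; rewrite -!mulr_e_eq0.
by rewrite mulrDl -mulrA mulee mulr0 addr0.
Qed.

Lemma natr_mule_inj t t' : (t < p)%N -> (t' < p)%N -> t%:R * e = t'%:R * e -> t = t'.
Proof.
have lt_pk m : (m < p)%N -> (m * p ^ k.-1 < p ^ k)%N.
  by move=> ltmp; rewrite expn_pred ltn_pmul2r // expn_gt0 prime_gt0.
move=> /lt_pk ltt /lt_pk ltt' /(congr1 val); rewrite -!natrM /= !val_Zp_nat ?pk_gt1 //.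
by rewrite !modn_small // => /eqP; rewrite eqn_pmul2r ?expn_gt0 ?prime_gt0 // => /eqP.
Qed.

Lemma mule_modp (c : R) : c * e = (c %% p)%:R * e.
Proof.
by rewrite -{1}(natr_Zp c) {1}(divn_eq c p) natrD natrM mulrDl -mulrA mulpe mulr0 add0r.
Qed.

Lemma card_units_Zpk : #|[set x : R | x \is a GRing.unit]| = (p ^ k - p ^ k.-1)%N.
Proof.
have := @card_units_Zp (p ^ k); rewrite expn_gt0 prime_gt0 // cardsT card_sub => /(_ isT).
rewrite totient_pfactor ?(ltnW k_gt1) // -subn1 mulnBl mul1n -expn_pred => <-.
by apply: eq_card => x; rewrite inE.
Qed.

Lemma card_nonunits_Zpk : #|[set x : R | x \isn't a GRing.unit]| = (p ^ k.-1)%N.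
Proof.
have := cardsC [set x : R | x \is a GRing.unit]; rewrite card_units_Zpk card_Zpk.
have -> : ~: [set x : R | x \is a GRing.unit] = [set x | x \isn't a GRing.unit].
  by apply/setP => x; rewrite !inE.
have le_pk : (p ^ k.-1 <= p ^ k)%N by rewrite leq_pexp2l ?prime_gt0 // leq_pred.
by move=> E; apply/eqP; rewrite -(eqn_add2l (p ^ k - p ^ k.-1)) E subnK.
Qed.

Hypothesis p_odd : odd p.

Lemma two_unit : (2 : R) \is a GRing.unit.
Proof.
rewrite unitZpE ?pk_gt1 // coprime_pexpl ?prime_coprime //; last exact: ltnW.
by apply: contraL p_odd => /(dvdn_leq (isT : 0 < 2)%N); case: (p) p_pr => [|[|[]]].
Qed.

Lemma addrr_eq0 (x : R) : (x + x == 0) = (x == 0).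
Proof. by rewrite -mulr2n -mulr_natl mulrI_eq0 //; apply: mulrI two_unit. Qed.

Section CyclicSubgroup.
Variable u : {unit R}.
Hypothesis u_def : val u = (p ^ k.-1 - 1)%N%:R.
Local Notation G := <[u]>%g.

Definition pm_unipotent (b : bool) (c : R) : R := (-1) ^+ b * (1 + c * e).

Lemma val_expu i : val (u ^+ i)%g = pm_unipotent (odd i) (- i%:R).
Proof.
rewrite FinRing.val_unitX u_def natrB ?expn_gt0 ?prime_gt0 // -opprB exprNn.
rewrite exprD1_sqr0 ?mulrNN ?mulee // /pm_unipotent signr_odd.
by rewrite mulNr mulr_natl mulNrn.
Qed.

Lemma expu_eq1 i : ((u ^+ i)%g == 1%g) = (2 * p %| i)%N.
Proof.
rewrite -val_eqE /= val_expu ?FinRing.val_unit1 /pm_unipotent Gauss_dvd ?coprime2n //.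
rewrite dvdn2; case: (odd i) => /=.
  apply/negbTE/eqP => /(congr1 (fun y => y * e)).
  rewrite mulN1r mulNr mulrDl !mul1r -mulrA mulee mulr0 addr0 => /eqP.
  by rewrite eq_sym -addr_eq0 addrr_eq0 (negbTE e_neq0).
by rewrite expr0 mul1r -subr_eq0 addrC addKr mulNr oppr_eq0 natr_mule_eq0.
Qed.

Lemma order_u : #[u]%g = (2 * p)%N.
Proof.
apply/eqP; rewrite eqn_dvd order_dvdn expu_eq1 dvdnn /=.
by rewrite -expu_eq1 expg_order.
Qed.

Lemma cycle_u_val g : g \in G -> exists b c, val g = pm_unipotent b c.
Proof. by case/cycleP=> i ->; exists (odd i), (- i%:R); apply: val_expu. Qed.

Lemma pm_unipotent_in_cycle b c : exists2 g, g \in G & val g = pm_unipotent b c.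
Proof.
(* i = b (mod 2) since p is odd, and i = -c (mod p). *)
pose j := (p.-1 * c)%N; pose i := (j + p * (b + j))%N.
have i_odd : odd i = b by rewrite /i oddD oddM p_odd oddD oddb addbC -addbA addbb addbF.
have p_dvd : (p %| i + c)%N.
  have -> : (i + c = p * (c + b + j))%N by have := prime_gt0 p_pr; rewrite /i /j; nia.
  exact: dvdn_mulr.
exists (u ^+ i)%g; first exact: mem_cycle.
rewrite val_expu i_odd /pm_unipotent mulNr; congr (_ * (1 + _)); apply/eqP.
by rewrite eqr_oppLR -addr_eq0 -mulrDl -[c in (_ + c)](natr_Zp c) -natrD natr_mule_eq0.
Qed.

Lemma ucoset_uP x y :
  reflect (exists b c, y = x * pm_unipotent b c) (y \in ucoset G x).
Proof.
apply: (iffP imsetP) => [[g /cycle_u_val[b [c gbc]] ->] | [b [c ->]]].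
  by exists b, c; rewrite gbc.
by have [g gG <-] := pm_unipotent_in_cycle b c; exists g.
Qed.

Lemma ucoset_nonunit x : x \isn't a GRing.unit -> ucoset G x = [set x; - x].
Proof.
rewrite -mulr_e_eq0 => /eqP xe0.
have xpm b c : x * pm_unipotent b c = (-1) ^+ b * x.
  by rewrite mulrCA mulrDr mulr1 mulrCA xe0 mulr0 addr0.
apply/setP => y; rewrite !inE; apply/ucoset_uP/orP => [[b [c ->]] | [] /eqP ->].
- by rewrite xpm; case: b; [right; rewrite expr1 mulN1r | left; rewrite expr0 mul1r].
- by exists false, 0; rewrite xpm expr0 mul1r.
- by exists true, 0; rewrite xpm expr1 mulN1r.
Qed.

Lemma card_ucoset_nonunit x :
  x \isn't a GRing.unit -> x != 0 -> #|ucoset G x| = 2%N.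
Proof. by move=> xN x_neq0; rewrite ucoset_nonunit // cards2 -addr_eq0 addrr_eq0 x_neq0. Qed.

Lemma card_ucoset_unit_u x : x \is a GRing.unit -> #|ucoset G x| = (2 * p)%N.
Proof. by move=> xU; rewrite (card_ucoset_unit <[u]>%G xU); apply: order_u. Qed.

Lemma card_ucoset_u_dvd x : (#|ucoset G x| %| 2 * p)%N.
Proof.
have [xU | xN] := boolP (x \is a GRing.unit); first by rewrite card_ucoset_unit_u.
have [-> | x_neq0] := eqVneq x 0; first by rewrite (ucoset0 <[u]>%G) cards1.
by rewrite card_ucoset_nonunit // dvdn_mulr.
Qed.

Lemma sum_div_card_ucoset_u :
  (\sum_x (2 * p) %/ #|ucoset G x| = p ^ k - p ^ k.-1 + (2 * p + (p ^ k.-1 - 1) * p))%N.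
Proof.
rewrite (bigID (fun x => x \is a GRing.unit)) /=; congr (_ + _)%N.
  rewrite (eq_bigr (fun=> 1%N)) => [|x xU]; last first.
    by rewrite card_ucoset_unit_u // divnn muln_gt0 (prime_gt0 p_pr).
  by rewrite sum1_card -card_units_Zpk; apply: eq_card => x; rewrite inE.
rewrite (bigD1 0) ?unitr0 //= (ucoset0 <[u]>%G) cards1 divn1; congr (_ + _)%N.
rewrite (eq_bigr (fun=> p)) => [|x /andP[xN x_neq0]]; last first.
  by rewrite card_ucoset_nonunit // mulKn ?(prime_gt0 p_pr).
rewrite sum_nat_cond_const; congr (_ * _)%N.
rewrite -card_nonunits_Zpk [in RHS](cardsD1 0) !inE unitr0 add1n subn1 /=.
by apply: eq_card => x; rewrite !inE andbC.
Qed.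

Lemma card_cosets_u : #|cosets G| = ((2 * p ^ k.-1 - p ^ (k - 2) + 1) %/ 2)%N.
Proof.
have pk1 : (p ^ k.-1 = p * p ^ (k - 2))%N by rewrite -expnS; congr expn; lia.
have P_gt0 : (0 < p ^ (k - 2))%N by rewrite expn_gt0 prime_gt0.
have := sum_div_card_ucoset card_ucoset_u_dvd; rewrite sum_div_card_ucoset_u.
move: #|cosets _| => C; rewrite expn_pred pk1.
move: (p ^ (k - 2))%N P_gt0 (prime_gt0 p_pr) => P P_gt0 p_gt0 E.
have C2 : (C * 2 = 2 * (p * P) - P + 1)%N.
  apply/eqP; rewrite -(eqn_pmul2r p_gt0) -mulnA -E !mulnDl !mulnBl !mulnDl.
  rewrite mul1n mul0n addn0 [(p * P * p)%N]mulnC [(P * p)%N]mulnC.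
  have : (p * P <= p * (p * P))%N by rewrite leq_pmull.
  have : (p <= p * (p * P))%N by rewrite leq_pmulr ?muln_gt0 ?p_gt0.
  lia.
by rewrite -C2 mulnK.
Qed.

Lemma ucoset_shiftP x a :
  reflect ((exists c, a = x * c * e) \/ (exists c, a = - (x * (2 + c * e))))
          (x + a \in ucoset G x).
Proof.
apply: (iffP (ucoset_uP _ _)) => [[[] [c xa]] | [[c ->] | [c ->]]].
- by right; exists c; apply: (addrI x); rewrite xa /pm_unipotent; ring.
- by left; exists c; apply: (addrI x); rewrite xa /pm_unipotent; ring.
- by exists false, c; rewrite /pm_unipotent; ring.
- by exists true, c; rewrite /pm_unipotent; ring.
Qed.

Lemma shift_nonunit_half x a : a \isn't a GRing.unit ->
  (exists c, a = - (x * (2 + c * e))) <-> x = - (a / 2).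
Proof.
move=> aN; split=> [[c a_def] | ->]; last first.
  by exists 0; rewrite mul0r addr0 mulNr divrK ?two_unit ?opprK.
have xN : x \isn't a GRing.unit.
  by apply: contra aN => xU; rewrite a_def unitrN unitrM xU unitrDmule two_unit.
move: xN; rewrite -mulr_e_eq0 => /eqP xe0.
by rewrite a_def mulrDr mulrCA xe0 mulr0 addr0 mulNr mulrK ?two_unit ?opprK.
Qed.

Lemma card_shift_unit a : a \is a GRing.unit ->
  #|[set x | x + a \in ucoset G x]| = p.
Proof.
move=> aU; pose inv2te (t : 'I_p) := (2 + t%:R * e)^-1.
have -> : [set x | x + a \in ucoset G x] = [set - a * inv2te t | t : 'I_p].
  apply/setP => x; rewrite inE; apply/ucoset_shiftP/imsetP.
    case=> -[c a_def].
      have : a * e == 0 by rewrite a_def -!mulrA mulee !mulr0.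
      by rewrite mulr_e_eq0 aU.
    exists (Ordinal (ltn_pmod c (prime_gt0 p_pr))) => //.
    by rewrite /inv2te /= -mule_modp a_def opprK mulrK // unitrDmule two_unit.
  case=> t _ ->; right; exists t%:R.
  by rewrite /inv2te !mulNr divrK ?opprK // unitrDmule two_unit.
rewrite card_imset ?card_ord // => t t' /(mulrI _)/invr_inj/addrI.
rewrite unitrN => /(_ aU) /(natr_mule_inj (ltn_ord t) (ltn_ord t')).
exact: val_inj.
Qed.

Lemma card_shift_mule a s : a = s * e -> a != 0 ->
  #|[set x | x + a \in ucoset G x]| = (p ^ k - p ^ k.-1).+1.
Proof.
move=> a_def a_neq0.
have aN : a \isn't a GRing.unit by rewrite -mulr_e_eq0 a_def -mulrA mulee mulr0.
have -> : [set x | x + a \in ucoset G x] = - (a / 2) |: [set x | x \is a GRing.unit].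
  apply/setP => x; rewrite !inE; apply/ucoset_shiftP/orP.
    case=> [[c xce] | /(shift_nonunit_half _ aN) ->]; last by left.
    right; apply: contraNT a_neq0; rewrite -mulr_e_eq0 xce => /eqP xe0.
    by rewrite -mulrA mulrCA xe0 mulr0.
  case=> [/eqP/(shift_nonunit_half _ aN) | xU]; first by right.
  by left; exists (s / x); rewrite mulrCA mulrV ?mulr1.
rewrite cardsU1 card_units_Zpk inE unitrN unitrMl ?unitrV ?two_unit //.
by rewrite (negbTE aN).
Qed.

Lemma card_shift_nonunit a : a \isn't a GRing.unit -> (forall s, a != s * e) ->
  #|[set x | x + a \in ucoset G x]| = 1%N.
Proof.
move=> aN a_notin; rewrite -(cards1 (- (a / 2))); apply: eq_card => x.
rewrite !inE; apply/ucoset_shiftP/eqP.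
  case=> [[c xce] | /(shift_nonunit_half _ aN) //].
  by case/eqP: (a_notin (x * c)).
by move/(shift_nonunit_half _ aN); right.
Qed.

End CyclicSubgroup.
End PrimePowerModulus.

Theorem theorem3p6 (p k : nat) (u : {unit 'Z_(p ^ k)})
    (h : {set 'Z_(p ^ k)} -> 'I_#|cosets <[u]>%g|) :
  prime p -> odd p -> 2 < k ->
  val u = ((p ^ k.-1 - 1)%:R)%R ->
  {in cosets <[u]>%g &, injective h} ->
  zero_difference (coset_index_fun h) (p ^ k)
    ((2 * p ^ k.-1 - p ^ (k - 2) + 1) %/ 2)
    (mem [:: 1; p; p ^ k - p ^ k.-1 + 1]).
Proof.
move=> p_pr p_odd k_gt2 u_def h_inj; have k_gt1 : 1 < k := ltnW k_gt2.
split; first by rewrite card_Zpk.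
  by rewrite (card_coset_index_image h_inj) (card_cosets_u p_pr k_gt1 p_odd u_def).
move=> a a_neq0.
have -> : [set x | coset_index_fun h (x + a)%R == coset_index_fun h x] =
          [set x | (x + a)%R \in ucoset <[u]>%g x].
  by apply/setP => x; rewrite !inE (coset_index_funE h_inj).
have [aU | aN] := boolP (a \is a GRing.unit).
  by rewrite (card_shift_unit p_pr k_gt1 p_odd u_def aU) !inE eqxx orbT.
have [/existsP[s /eqP a_def] | a_notin] := boolP [exists s, a == (s * (p ^ k.-1)%:R)%R].
  by rewrite (card_shift_mule p_pr k_gt1 p_odd u_def a_def a_neq0) addn1 !inE eqxx !orbT.
rewrite (card_shift_nonunit p_pr k_gt1 p_odd u_def aN) ?inE ?eqxx // => s.
by apply: contra a_notin => a_def; apply/existsP; exists s.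
Qed.
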